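(* For any orientation-preserving homeomorphism $f:\mathbb{S}^1\to\mathbb{S}^1$, the induced map $C(f):C(\mathbb{S}^1)\to C(\mathbb{S}^1)$ satisfies $h_{\mathrm{pol}}(C(f))\le 2$.
   Context: $C(\mathbb{S}^1)$ is the set of all nonempty closed connected subsets of $\mathbb{S}^1$ with the Hausdorff metric $d_H(A,B)=\inf\{\varepsilon>0: A\subset U(B,\varepsilon),\ B\subset U(A,\varepsilon)\}$, $U(A,\varepsilon)=\{x: d(x,A)<\varepsilon\}$; $C(f)(A)=f(A)$. For a continuous map $g:Z\to Z$ of a compact metric space $(Z,\rho)$, define $\rho^g_n(x,y)=\max_{0\le k\le n-1}\rho(g^k(x),g^k(y))$; a finite set $E\subset Z$ is $(n,\varepsilon)$-separated if $\rho^g_n(x,y)\ge\varepsilon$ for all distinct $x,y\in E$; $\mathrm{sep}(n,\varepsilon)$ is the maximal cardinality of such a set; and $h_{\mathrm{pol}}(g)=\lim_{\varepsilon\to0}\limsup_{n\to\infty}\frac{\log \mathrm{sep}(n,\varepsilon)}{\log n}$. *)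

From HB Require Import structures.
From mathcomp Require Import all_boot all_order all_algebra.
From mathcomp Require Import all_classical all_reals all_analysis.
Set Implicit Arguments. Unset Strict Implicit. Unset Printing Implicit Defensive.
Import Order.TTheory GRing.Theory Num.Theory.
Import numFieldNormedType.Exports.
Local Open Scope classical_set_scope.
Local Open Scope ring_scope.

Section Defs.
Variable R : realType.

Definition S1 : set (R * R) := [set p | p.1 ^+ 2 + p.2 ^+ 2 = 1].

Definition dS1 (p q : R * R) : R := Num.sqrt ((p.1 - q.1) ^+ 2 + (p.2 - q.2) ^+ 2).

Definition expS1 (t : R) : R * R := (cos (2 * pi * t), sin (2 * pi * t)).

Definition homeo_S1 (f : R * R -> R * R) : Prop :=
  exists g : R * R -> R * R,
    (forall p, S1 p -> S1 (f p)) /\ (forall p, S1 p -> S1 (g p)) /\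
    (forall p, S1 p -> g (f p) = p) /\ (forall p, S1 p -> f (g p) = p) /\
    {within S1, continuous f} /\ {within S1, continuous g}.

Definition orient_pres_homeo_S1 (f : R * R -> R * R) : Prop :=
  homeo_S1 f /\
  exists F : R -> R, {homo F : x y / x < y} /\ forall t, f (expS1 t) = expS1 (F t).

Definition CS1 : set (set (R * R)) :=
  [set A | [/\ A `<=` S1, A !=set0, closed A & connected A]].

Definition dist_set (x : R * R) (A : set (R * R)) : R := inf [set dS1 x a | a in A].
Definition Unbhd (A : set (R * R)) (eps : R) : set (R * R) :=
  [set x | S1 x /\ dist_set x A < eps].

Definition dH (A B : set (R * R)) : R :=
  inf [set eps : R | 0 < eps /\ A `<=` Unbhd B eps /\ B `<=` Unbhd A eps].

Definition Cmap (f : R * R -> R * R) (A : set (R * R)) : set (R * R) := f @` A.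

Context {Z : Type}.
Variables (D : set Z) (rho : Z -> Z -> R) (g : Z -> Z).

Definition rho_n (n : nat) (x y : Z) : R :=
  \big[Num.max/0]_(k < n) rho (iter k g x) (iter k g y).

Definition sep (n : nat) (eps : R) : R :=
  sup [set x : R | exists k (E : 'I_k -> Z), x = k%:R /\ (forall i, D (E i)) /\
        (forall i j, i != j -> eps <= rho_n n (E i) (E j))].

Definition hpol_eps (eps : R) : \bar R :=
  limn_esup (fun n : nat => (ln (sep n eps) / ln n%:R)%:E).

Definition hpol : \bar R := lim (hpol_eps @ 0^'+).

End Defs.

From HB Require Import structures.
From mathcomp Require Import all_boot all_order all_algebra.
From mathcomp Require Import all_classical all_reals all_analysis.
From mathcomp Require Import ring lra zify.
Import Order.TTheory GRing.Theory Num.Theory.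
Import numFieldNormedType.Exports.
Set Implicit Arguments.
Unset Strict Implicit.
Unset Printing Implicit Defensive.
Local Open Scope classical_set_scope.
Local Open Scope ring_scope.

(* A proper subcontinuum of the circle is an arc [e [s, t]] with [0 <= s < 1] and
   [s <= t < s + 1], so arcs are coded by two parameters in [[0, 2)]. Take [N] grid points
   on the circle with [4 pi / N < eps] and cut [[0, 2)] at the parameters that [f^k],
   [k < n], sends to grid points: at most [2 n N] cuts, hence [O(n N)] cells. If the
   endpoints of two arcs lie in the same cells, then for each [k < n] every point of one
   arc is matched with a point of the other in the same cell; the [f^k]-image of the
   segment between them is connected and misses the grid, so the two image points are
   [4 pi / N]-close. Thus arcs with equal cell codes are not [(n, eps)]-separated,
   [sep (n, eps) = O(n^2)] and the polynomial entropy is at most [2]. *)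

Section CircleParametrization.
Variable R : realType.
Local Notation e := (@expS1 R).

Lemma S1_expS1 t : S1 (e t).
Proof. by rewrite /S1 /expS1 /= cos2Dsin2. Qed.

Lemma expS1D1 t : e (t + 1) = e t.
Proof.
by rewrite /expS1 mulrDr mulr1 [2 * pi]mulr_natl cosD2pi sinD2pi.
Qed.

Lemma expS1Dz t (z : int) : e (t + z%:~R) = e t.
Proof.
have expS1Dn u (m : nat) : e (u + m%:R) = e u.
  by elim: m => [|m IH]; rewrite ?addr0 // -natr1 addrA expS1D1.
case: z => m; first exact: expS1Dn.
by rewrite NegzE mulrNz -(expS1Dn _ m.+1) subrK.
Qed.

Lemma cos2piM_eq1 x : cos (2 * pi * x) = 1 :> R -> x = (Num.floor x)%:~R.
Proof.
move=> cx; set r := x - (Num.floor x)%:~R.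
have [r_ge0 r_lt1] : 0 <= r /\ r < 1.
  by have /andP[] := floor_itv x; rewrite intrD /r; split; lra.
have cr : cos (2 * pi * r) = 1.
  by have [+ _] := expS1Dz x (- Num.floor x); rewrite intrN cx.
have pi0 := pi_gt0 R.
suff : r = 0 by rewrite /r => /eqP; rewrite subr_eq0 => /eqP.
(* [cos] is injective on [0, pi], so [2 pi r] or [2 pi (1 - r)] lies there and vanishes *)
have [rh|rh] := leP r (1/2).
  suff : 2 * pi * r = 0 by nra.
  apply: cos_inj; rewrite ?cr ?cos0 // !in_itv /= ?lexx ?pi_ge0 //.
  by apply/andP; split; nra.
have c1r : cos (2 * pi * (1 - r)) = 1.
  by rewrite mulrBr mulr1 -cosN opprB [2 * pi]mulr_natl -cosD2pi subrK -mulr_natl.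
suff : 2 * pi * (1 - r) = 0 by nra.
apply: cos_inj; rewrite ?c1r ?cos0 // ?in_itv /= ?lexx ?pi_ge0 //.
by apply/andP; split; nra.
Qed.

Lemma expS1_eq u v : e u = e v -> exists z : int, u = v + z%:~R.
Proof.
rewrite /expS1 => -[hc hs].
have /cos2piM_eq1 huv : cos (2 * pi * (u - v)) = 1.
  by rewrite mulrBr cosB hc hs cos2Dsin2.
by exists (Num.floor (u - v)); rewrite -huv; lra.
Qed.

Lemma expS1_inj_itv a u v : a <= u < a + 1 -> a <= v < a + 1 -> e u = e v -> u = v.
Proof.
move=> /andP[au ua] /andP[av va] /expS1_eq [z uvz].
suff z0 : z = 0 by rewrite uvz z0 addr0.
have : (-1 < z)%R by rewrite -(ltr_int R) mulrNz; lra.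
have : (z < 1)%R by rewrite -(ltr_int R); lra.
lia.
Qed.

Lemma expS1_surj p : S1 p -> exists u, e u = p.
Proof.
case: p => c d; rewrite /S1 /= => cd1.
have c_itv : -1 <= c <= 1 by apply/andP; split; nra.
have sqrt_d : Num.sqrt (1 - c ^+ 2) = `|d| by rewrite -sqrtr_sqr; congr Num.sqrt; lra.
have pi2_neq0 : 2 * pi != 0 :> R by rewrite mulf_neq0 ?gt_eqF ?pi_gt0.
have [d_ge0|d_lt0] := leP 0 d.
  exists (acos c / (2 * pi)); rewrite /expS1 mulrC divfK //.
  by rewrite acosK ?in_itv //= sin_acos // sqrt_d ger0_norm.
exists (- (acos c / (2 * pi))); rewrite /expS1 mulrN mulrC divfK //.
by rewrite cosN sinN acosK ?in_itv //= sin_acos // sqrt_d ltr0_norm // opprK.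
Qed.

Lemma expS1_surj_itv a p : S1 p -> exists2 u, a <= u < a + 1 & e u = p.
Proof.
move=> /expS1_surj [u <-]; exists (u - (Num.floor (u - a))%:~R).
  by have /andP[] := floor_itv (u - a); rewrite intrD; lra.
by rewrite -intrN expS1Dz.
Qed.

Lemma continuous_expS1 : continuous e.
Proof.
move=> x; apply: (@cvg_pair _ _ _ (nbhs x) (nbhs (cos (2 * pi * x)))
  (nbhs (sin (2 * pi * x))) _ _ _ (fun t => cos (2 * pi * t)) (fun t => sin (2 * pi * t))).
- apply: continuous_comp; [exact: mulrl_continuous|exact: continuous_cos].
- apply: continuous_comp; [exact: mulrl_continuous|exact: continuous_sin].
Qed.

End CircleParametrization.

Section ChordMetric.
Variable R : realType.
Implicit Types p q : (R * R)%type.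

Lemma dS1_ge0 p q : 0 <= dS1 p q.
Proof. exact: sqrtr_ge0. Qed.

Lemma dS1C p q : dS1 p q = dS1 q p.
Proof. by rewrite /dS1 -[p.1 - q.1]opprB -[p.2 - q.2]opprB !sqrrN. Qed.

Lemma dS1xx p : dS1 p p = 0.
Proof. by rewrite /dS1 !subrr expr0n /= addr0 sqrtr0. Qed.

Lemma dS1_le_norm p q : dS1 p q <= `|p.1 - q.1| + `|p.2 - q.2|.
Proof.
set a := p.1 - q.1; set b := p.2 - q.2.
have : a ^+ 2 + b ^+ 2 <= (`|a| + `|b|) ^+ 2.
  rewrite [in X in _ <= X]sqrrD !real_normK ?num_real // -addrA lerD2l lerDr.
  by rewrite mulrn_wge0 ?mulr_ge0.
by move=> /ler_wsqrtr; rewrite sqrtr_sqr ger0_norm ?addr_ge0.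
Qed.

Lemma norm_sub_le_of_deriv_le1 (f df : R -> R) : continuous f ->
  (forall x : R, is_derive x 1 f (df x)) -> (forall x, `|df x| <= 1) ->
  forall a b, `|f a - f b| <= `|a - b|.
Proof.
move=> fC fD dfB a b; wlog ab : a b / a <= b.
  move=> H; have [/H //|/ltW /H] := leP a b.
  by rewrite distrC [`|b - a|]distrC.
have [c _ fba] := MVT_segment ab (fun x _ => fD x) (continuous_subspaceT fC).
by rewrite distrC fba [`|a - b|]distrC normrM ler_piMl.
Qed.

Lemma dS1_expS1_le (u v : R) : dS1 (expS1 u) (expS1 v) <= 4 * pi * `|u - v|.
Proof.
set x := 2 * pi * u; set y := 2 * pi * v.
have xy : `|x - y| = 2 * pi * `|u - v|.
  by rewrite -mulrBr normrM ger0_norm // mulr_ge0 // pi_ge0.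
have dcos_le (z : R) : `|- sin z| <= 1 by rewrite normrN sin_max.
have cos_le := norm_sub_le_of_deriv_le1 (@continuous_cos R) (@is_derive_cos R) dcos_le x y.
have sin_le :=
  norm_sub_le_of_deriv_le1 (@continuous_sin R) (@is_derive_sin R) (@cos_max R) x y.
apply: le_trans (dS1_le_norm _ _) _; rewrite /= -/x -/y.
have -> : 4 * pi * `|u - v| = `|x - y| + `|x - y| by rewrite xy; ring.
exact: lerD.
Qed.

End ChordMetric.

Section Arcs.
Variable R : realType.
Local Notation e := (@expS1 R).

Lemma closed_expS1_itv (a b : R) : closed (e @` `[a, b]).
Proof.
apply: compact_closed; first exact: norm_hausdorff.
apply: continuous_compact; last exact: segment_compact.
exact/continuous_subspaceT/continuous_expS1.
Qed.

Lemma expS1_itvDz (s t : R) (z : int) :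
  e @` `[s + z%:~R, t + z%:~R] = e @` `[s, t].
Proof.
apply/seteqP; split => _ [u + <-]; rewrite /= in_itv /= => /andP[su ut].
  by exists (u - z%:~R); [rewrite in_itv /=; apply/andP; split; lra|rewrite -intrN expS1Dz].
by exists (u + z%:~R); [rewrite in_itv /=; apply/andP; split; lra|rewrite expS1Dz].
Qed.

Lemma connected_subset_arc (C : set (R * R)) (a w x : R) :
  C `<=` @S1 R -> connected C -> a < w < a + 1 -> ~ C (e a) -> ~ C (e w) ->
  a < x < w -> C (e x) -> C `<=` e @` `[a, w].
Proof.
move=> CS1 Cconn /andP[aw wa] Ca Cw /andP[ax xw] Cx.
(* [C] misses the endpoints of the arc [e [a, w]], so [C `&` e [a, w]] is clopen in [C] *)
suff <- : C `&` e @` `[a, w] = C by move=> y [].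
apply: Cconn.
- by exists (e x); split => //; exists x; rewrite //= in_itv /= !ltW.
- exists (~` (e @` `[w, a + 1])); first exact/closed_openC/closed_expS1_itv.
  apply/seteqP; split => y [Cy y_arc]; split => //.
    case: y_arc Cy => r + <- Cy [r']; rewrite /= !in_itv /=.
    move=> /andP[ar rw] /andP[wr' r'a] er'.
    have [r'a1|r'a1] := ltP r' (a + 1).
      have rr' : r = r'.
        by apply: (@expS1_inj_itv _ a); rewrite ?er' //; apply/andP; split; lra.
      have wr : w = r by lra.
      by apply: Cw; rewrite wr.
    have r'_eq : r' = a + 1 by lra.
    by apply: Ca; rewrite -expS1D1 -r'_eq er'.
  have [r /andP[ar ra] er] := expS1_surj_itv a (CS1 _ Cy).
  exists r => //; rewrite /= in_itv /= ar /= leNgt; apply/negP => wr.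
  by apply: y_arc; exists r; rewrite //= in_itv /= !ltW.
- by exists (e @` `[a, w]) => //; exact: closed_expS1_itv.
Qed.

Lemma closed_inf_mem (T : set R) : closed T -> T !=set0 -> has_lbound T -> T (inf T).
Proof.
move=> cT T0 lT; apply: itv_closed_infimums => //; split => [x|y]; first exact: ge_inf.
exact: lb_le_inf.
Qed.

Lemma closed_sup_mem (T : set R) : closed T -> T !=set0 -> has_ubound T -> T (sup T).
Proof.
move=> cT T0 uT; apply: itv_closed_supremums => //; split => [x|y]; first exact: ub_le_sup.
exact: ge_sup.
Qed.

Definition lift_on (A : set (R * R)) (a : R) : set R :=
  [set u | a <= u <= a + 1 /\ A (e u)].

Section LiftOn.
Variables (A : set (R * R)) (a : R).
Hypotheses (AS1 : A `<=` @S1 R) (Aa : ~ A (e a)).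

Lemma lift_on_itv u : lift_on A a u -> a < u < a + 1.
Proof.
move=> [/andP[au ua] Au]; rewrite !lt_neqAle au ua !andbT.
apply/andP; split; apply/eqP => ueq; apply: Aa; first by rewrite ueq.
by rewrite -expS1D1 -ueq.
Qed.

Lemma lift_on_interval : connected A ->
  forall u v w, lift_on A a u -> lift_on A a v -> u <= w <= v -> lift_on A a w.
Proof.
move=> Aconn u v w Lu Lv /andP[uw wv].
have /andP[au ua] := lift_on_itv Lu; have /andP[av va] := lift_on_itv Lv.
split; first by apply/andP; split; lra.
apply: contrapT => Aw.
have [wu|wu] := eqVneq w u; first by apply: Aw; rewrite wu; exact: Lu.2.
have [wv'|wv'] := eqVneq w v; first by apply: Aw; rewrite wv'; exact: Lv.2.
have aw : a < w < a + 1 by apply/andP; split; lra.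
have auw : a < u < w by rewrite au lt_neqAle eq_sym wu uw.
have [r] := connected_subset_arc AS1 Aconn aw Aa Aw auw Lu.2 Lv.2.
rewrite /= in_itv /= => /andP[ar rw] /(@expS1_inj_itv _ a) rv.
have : w < v by rewrite lt_neqAle wv' wv.
suff : r = v by lra.
by apply: rv; apply/andP; split; lra.
Qed.

Lemma closed_lift_on : closed A -> closed (lift_on A a).
Proof.
move=> Acl; rewrite (_ : lift_on A a = `[a, a + 1] `&` e @^-1` A).
  apply: closedI; first exact: itv_closed.
  exact: preimage_closed (fun x _ => @continuous_expS1 R x) Acl.
by apply/seteqP; split => u [u_itv Au]; split; rewrite //= in_itv.
Qed.

Lemma lift_onK : e @` lift_on A a = A.
Proof.
apply/seteqP; split => [_ [u [_ Au] <-] //|p Ap].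
have [u /andP[au ua] eu] := expS1_surj_itv a (AS1 Ap).
by exists u => //; split; [apply/andP; split; lra|rewrite eu].
Qed.

End LiftOn.

Lemma CS1_arc (A : set (R * R)) : CS1 A -> ~ (@S1 R `<=` A) ->
  exists s t : R, [/\ 0 <= s < 1, s <= t < s + 1 & A = e @` `[s, t]].
Proof.
case=> AS1 [y Ay] Acl Aconn /existsNP [p /not_implyP [S1p Ap]].
have [a ea] := expS1_surj S1p; rewrite -ea in Ap.
set T := lift_on A a.
have Tcl : closed T := closed_lift_on Acl.
have T0 : T !=set0 by rewrite -(lift_onK a AS1) in Ay; case: Ay => u Tu _; exists u.
have Ts : T (inf T) by apply: closed_inf_mem => //; exists a => u [/andP[]].
have Tt : T (sup T) by apply: closed_sup_mem => //; exists (a + 1) => u [/andP[]].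
set s := inf T in Ts; set t := sup T in Tt.
have Tst : T = `[s, t]%classic.
  apply/seteqP; split => u; rewrite /= in_itv /=.
    by move=> Tu; rewrite ge_inf ?ub_le_sup //; [exists (a + 1)|exists a] => v [/andP[]].
  exact: lift_on_interval AS1 Ap Aconn _ _ _ Ts Tt.
have /andP[as_ sa] := lift_on_itv Ap Ts; have /andP[at_ ta] := lift_on_itv Ap Tt.
have st : s <= t by move: Ts; rewrite Tst /= in_itv /= => /andP[].
have /andP[fs sf] := floor_itv s; rewrite intrD in sf.
exists (s - (Num.floor s)%:~R), (t - (Num.floor s)%:~R); split.
- by apply/andP; split; lra.
- by apply/andP; split; lra.
- by rewrite -!intrN expS1_itvDz -Tst lift_onK.
Qed.

End Arcs.

Section Iterates.
Variables (R : realType) (f : R * R -> R * R).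
Hypothesis fS1 : forall p, S1 p -> S1 (f p).

Lemma S1_iter k p : S1 p -> S1 (iter k f p).
Proof. by elim: k => [//|k IH] /IH /fS1. Qed.

Lemma iter_image_S1 k (X : set (R * R)) : X `<=` @S1 R -> iter k f @` X `<=` @S1 R.
Proof. by move=> XS1 _ [x Xx <-]; exact/S1_iter/XS1. Qed.

Lemma iter_inj k : (forall p q, S1 p -> S1 q -> f p = f q -> p = q) ->
  forall p q, S1 p -> S1 q -> iter k f p = iter k f q -> p = q.
Proof.
move=> finj; elim: k => [//|k IH] p q S1p S1q /= /finj fpq.
by apply: IH => //; apply: fpq; exact: S1_iter.
Qed.

Lemma connected_iter_image k (X : set (R * R)) : {within @S1 R, continuous f} ->
  X `<=` @S1 R -> connected X -> connected (iter k f @` X).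
Proof.
move=> fC XS1 Xconn; elim: k => [|k IH]; first by rewrite image_id.
have -> : iter k.+1 f @` X = f @` (iter k f @` X) by rewrite image_comp.
apply: connected_continuous_connected => //.
exact: continuous_subspaceW (iter_image_S1 XS1) fC.
Qed.

End Iterates.

Lemma iter_Cmap (R : realType) (f : R * R -> R * R) k A : iter k (Cmap f) A = iter k f @` A.
Proof. by elim: k => [|k IH] /=; rewrite ?image_id // IH /Cmap image_comp. Qed.

Section Hausdorff.
Variable R : realType.
Implicit Types X Y : set (R * R).

Lemma dist_set_le Y x y : Y y -> dist_set x Y <= dS1 x y.
Proof.
move=> Yy; apply: ge_inf; last by exists y.
by exists 0 => _ [z _ <-]; exact: dS1_ge0.
Qed.

Lemma dH_lt X Y (d eps : R) : X `<=` @S1 R -> Y `<=` @S1 R -> 0 <= d < eps ->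
  (forall x, X x -> exists2 y, Y y & dS1 x y <= d) ->
  (forall y, Y y -> exists2 x, X x & dS1 y x <= d) -> dH X Y < eps.
Proof.
move=> XS1 YS1 /andP[d0 deps] XY YX.
have Unbhd_mid Z W : Z `<=` @S1 R -> (forall z, Z z -> exists2 w, W w & dS1 z w <= d) ->
    Z `<=` Unbhd W ((d + eps) / 2).
  move=> ZS1 ZW z Zz; split; first exact: ZS1.
  have [w Ww zw] := ZW z Zz; apply: le_lt_trans (dist_set_le z Ww) _; lra.
apply: (@le_lt_trans _ _ ((d + eps) / 2)); last by lra.
apply: ge_inf; first by exists 0 => r [/ltW].
by split; [lra|split; exact: Unbhd_mid].
Qed.

End Hausdorff.

Lemma rho_n_lt (R : realType) (Z : Type) (rho : Z -> Z -> R) (g : Z -> Z) n x y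
    (eps : R) :
  0 < eps -> (forall k, (k < n)%N -> rho (iter k g x) (iter k g y) < eps) ->
  rho_n rho g n x y < eps.
Proof.
move=> eps0 close; rewrite /rho_n; elim/big_ind: _ => // [a b|i _].
  by rewrite gt_max => -> ->.
exact: close.
Qed.

Lemma leq_bool (a b : bool) : (a -> b) -> (a <= b)%N.
Proof. by case: a; case: b => // /(_ isT). Qed.

Section CutCount.
Variables (R : realType) (I : finType) (v : I -> R).

(* Each cut is counted once when reached and once more when passed, so [cut_count] is
   constant exactly on the single cuts and on the open gaps between consecutive cuts. *)
Definition cut_count (u : R) : nat := (\sum_i ((v i < u)%R + (v i <= u)%R))%N.

Let cut_term_homo i u u' : u <= u' ->
  ((v i < u)%R + (v i <= u)%R <= (v i < u')%R + (v i <= u')%R)%N.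
Proof.
move=> uu'; apply: leq_add; apply: leq_bool => vi_u.
  exact: lt_le_trans vi_u uu'.
exact: le_trans vi_u uu'.
Qed.

Lemma cut_count_homo : {homo cut_count : u u' / u <= u' >-> (u <= u')%N}.
Proof. by move=> u u' uu'; apply: leq_sum => i _; exact: cut_term_homo. Qed.

Lemma cut_count_le u : (cut_count u <= 2 * #|I|)%N.
Proof.
rewrite mulnC -sum_nat_const; apply: leq_sum => i _.
exact: leq_add (leq_b1 _) (leq_b1 _).
Qed.

Lemma cut_count_lt u u' i : u < u' -> u <= v i <= u' -> (cut_count u < cut_count u')%N.
Proof.
move=> uu' /andP[ui iu']; rewrite /cut_count (bigD1 i) //= [X in (_ < X)%N](bigD1 i) //=.
rewrite -addSn leq_add ?leq_sum // => [|j _]; last exact/cut_term_homo/ltW.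
rewrite ltNge ui iu' /=; case: (eqVneq (v i) u) => [->|iu]; first by rewrite lexx uu'.
by rewrite leNgt lt_neqAle eq_sym iu ui addn1.
Qed.

Lemma cut_count_eq_gap u u' i : u < u' -> cut_count u = cut_count u' -> ~ (u <= v i <= u').
Proof. by move=> uu' cuu' /(cut_count_lt uu'); rewrite cuu' ltnn. Qed.

End CutCount.

Lemma homo_level_match (R : realType) (c : R -> nat) (s t s' t' x : R) :
  {homo c : u u' / u <= u' >-> (u <= u')%N} -> s' <= t' ->
  c s = c s' -> c t = c t' -> s <= x <= t -> exists2 x', s' <= x' <= t' & c x = c x'.
Proof.
move=> c_homo st' cs ct /andP[sx xt].
have [xs|xs] := eqVneq (c x) (c s); first by exists s'; rewrite ?lexx ?st' ?xs.
have [xt'|xt'] := eqVneq (c x) (c t); first by exists t'; rewrite ?lexx ?st' ?xt'.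
exists x => //; rewrite !leNgt; apply/andP; split; apply/negP => /ltW/c_homo.
  by have := c_homo _ _ sx; move: xs; lia.
by have := c_homo _ _ xt; move: xt'; lia.
Qed.

Section Grid.
Variables (R : realType) (N : nat).
Hypothesis N_ge2 : (2 <= N)%N.
Local Notation e := (@expS1 R).

Definition grid_point (j : nat) : R * R := e (j%:R / N%:R).

Lemma connected_grid_free_dS1_le (C : set (R * R)) p q :
  C `<=` @S1 R -> connected C -> (forall j, (j < N)%N -> ~ C (grid_point j)) ->
  C p -> C q -> dS1 p q <= 4 * pi / N%:R.
Proof.
move=> CS1 Cconn Cfree Cp Cq.
have N_gt0 : 0 < N%:R :> R by rewrite ltr0n; lia.
have [r /andP[r_ge0 r_lt1] er] := expS1_surj_itv 0 (CS1 _ Cp).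
rewrite add0r in r_lt1; rewrite -er in Cp *.
pose j := Num.truncn (r * N%:R); pose a : R := j%:R / N%:R; pose w : R := j.+1%:R / N%:R.
have /andP[jr rj] := truncn_itv (mulr_ge0 r_ge0 (ltW N_gt0)).
have j_ltN : (j < N)%N.
  by rewrite -(ltr_nat R); apply: le_lt_trans jr _; rewrite -[X in _ < X]mul1r ltr_pM2r.
have ar : a <= r by rewrite ler_pdivrMr.
have rw : r < w by rewrite ltr_pdivlMr.
have wa : w - a = 1 / N%:R by rewrite -mulrBl -natr1 addrAC subrr add0r.
have N1 : 1 / N%:R < 1 :> R by rewrite ltr_pdivrMr // mul1r ltr1n.
have ar' : a < r.
  rewrite lt_neqAle ar andbT; apply/eqP => ar'.
  by apply: (Cfree j j_ltN); rewrite /grid_point -/a ar'.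
have Cw : ~ C (e w).
  have [jN|jN] := ltnP j.+1 N; first exact: Cfree j.+1 jN.
  have -> : w = 0 + 1 by rewrite /w (_ : j.+1 = N) ?divff ?add0r ?gt_eqF //; lia.
  by rewrite expS1D1; have := Cfree 0%N (ltnW N_ge2); rewrite /grid_point mul0r.
have awa : a < w < a + 1 by apply/andP; split; lra.
have arw : a < r < w by rewrite ar' rw.
have [r' /= + <-] := connected_subset_arc CS1 Cconn awa (Cfree j j_ltN) Cw arw Cp Cq.
rewrite in_itv /= => /andP[ar'' r'w].
apply: le_trans (dS1_expS1_le _ _) _; rewrite ler_pM2l ?mulr_gt0 ?pi_gt0 // -div1r -wa.
by rewrite ler_norml; apply/andP; split; lra.
Qed.

End Grid.

Section Cells.
Variables (R : realType) (f : R * R -> R * R).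
Hypothesis fS1 : forall p, S1 p -> S1 (f p).
Hypothesis finj : forall p q, S1 p -> S1 q -> f p = f q -> p = q.
Hypothesis fC : {within @S1 R, continuous f}.
Variables (N n : nat).
Hypothesis N_ge2 : (2 <= N)%N.
Local Notation e := (@expS1 R).

Let mesh_ge0 : 0 <= 4 * pi / N%:R :> R.
Proof. by rewrite mulr_ge0 ?invr_ge0 ?mulr_ge0 ?pi_ge0. Qed.

(* The parameter in [[l, l + 1)] of the point that [f^k] sends to the [j]-th grid point
   (unique by injectivity; the default [0] only adds a harmless extra cut). *)
Definition cut_point (k j l : nat) : R :=
  xget 0 [set v | l%:R <= v < l%:R + 1 /\ iter k f (e v) = grid_point R N j].

Definition cell : R -> nat :=
  cut_count (fun i : 'I_n * 'I_N * 'I_2 => cut_point i.1.1 i.1.2 i.2).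

Lemma cell_le u : (cell u <= 4 * (n * N))%N.
Proof. by apply: leq_trans (cut_count_le _ _) _; rewrite !card_prod !card_ord; lia. Qed.

Lemma cell_eq_grid_free u u' k j : 0 <= u -> u < u' < 2 -> cell u = cell u' ->
  (k < n)%N -> (j < N)%N -> ~ (iter k f @` (e @` `[u, u'])) (grid_point R N j).
Proof.
move=> u_ge0 /andP[uu' u'2] cuu' k_lt j_lt [_ [w + <-] fkw]; rewrite /= in_itv /= => uwu'.
have [l l_lt2 lw] : exists2 l : nat, (l < 2)%N & l%:R <= w < l%:R + 1.
  by case: (ltP w 1) => w1; [exists 0%N|exists 1%N] => //; apply/andP; split; lra.
have : exists v, l%:R <= v < l%:R + 1 /\ iter k f (e v) = grid_point R N j by exists w.
move=> /(xgetPex 0); rewrite -/(cut_point k j l) => -[cut_itv fk_cut].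
have cut_w : cut_point k j l = w.
  apply: (@expS1_inj_itv _ l%:R) => //.
  by apply: (iter_inj (k := k) fS1 finj) (S1_expS1 _) (S1_expS1 _) _; rewrite fk_cut fkw.
apply: (cut_count_eq_gap (i := (Ordinal k_lt, Ordinal j_lt, Ordinal l_lt2)) uu' cuu').
by rewrite /= cut_w.
Qed.

Lemma cell_eq_iter_dS1_le u u' k : 0 <= u -> 0 <= u' -> u < 2 -> u' < 2 ->
  cell u = cell u' -> (k < n)%N -> dS1 (iter k f (e u)) (iter k f (e u')) <= 4 * pi / N%:R.
Proof.
wlog uu' : u u' / u <= u'.
  move=> H u0 u'0 u2 u'2 cuu' k_lt; have [/H|/ltW/H] := leP u u'; first exact.
  by rewrite dS1C; apply.
move=> u0 _ _ u'2 cuu' k_lt; move: uu'; rewrite le_eqVlt => /predU1P[<-|uu'].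
  by rewrite dS1xx.
have arcS1 : e @` `[u, u'] `<=` @S1 R by move=> _ [x _ <-]; exact: S1_expS1.
apply: (connected_grid_free_dS1_le N_ge2 (iter_image_S1 (k := k) fS1 arcS1)).
- apply: connected_iter_image => //; apply: connected_continuous_connected.
    by apply/connected_intervalP; exact: interval_is_interval.
  exact/continuous_subspaceT/continuous_expS1.
- by move=> j j_lt; apply: cell_eq_grid_free; rewrite ?uu'.
- by exists (e u) => //; exists u; rewrite //= in_itv /= lexx (ltW uu').
- by exists (e u') => //; exists u'; rewrite //= in_itv /= lexx (ltW uu').
Qed.

Lemma dH_iter_arcs (eps s t s' t' : R) k : 4 * pi / N%:R < eps ->
  0 <= s <= t -> t < 2 -> 0 <= s' <= t' -> t' < 2 ->
  cell s = cell s' -> cell t = cell t' -> (k < n)%N ->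
  dH (iter k f @` (e @` `[s, t])) (iter k f @` (e @` `[s', t'])) < eps.
Proof.
move=> eps_gt /andP[s0 st] t2 /andP[s'0 st'] t'2 css' ctt' k_lt.
have arcS1 a b : e @` `[a, b] `<=` @S1 R by move=> _ [x _ <-]; exact: S1_expS1.
have close a b a' b' : 0 <= a -> b < 2 -> 0 <= a' -> b' < 2 -> a' <= b' ->
    cell a = cell a' -> cell b = cell b' ->
    forall y, (iter k f @` (e @` `[a, b])) y ->
    exists2 y', (iter k f @` (e @` `[a', b'])) y' & dS1 y y' <= 4 * pi / N%:R.
  move=> a0 b2 a'0 b'2 ab' caa' cbb' _ [_ [x + <-] <-]; rewrite /= in_itv /= => axb.
  have [x' /andP[ax' xb'] cxx'] :=
    homo_level_match (@cut_count_homo _ _ _) ab' caa' cbb' axb.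
  exists (iter k f (e x')).
    by exists (e x') => //; exists x'; rewrite //= in_itv /= ax'.
  by apply: cell_eq_iter_dS1_le; rewrite //; lra.
apply: (dH_lt (d := 4 * pi / N%:R) (iter_image_S1 (k := k) fS1 (arcS1 _ _))
  (iter_image_S1 (k := k) fS1 (arcS1 _ _))); rewrite ?mesh_ge0 ?eps_gt //; exact: close.
Qed.

Definition arc_params (A : set (R * R)) (st : R * R) : Prop :=
  [/\ 0 <= st.1 < 1, st.1 <= st.2 < st.1 + 1 & A = e @` `[st.1, st.2]].

Definition arc_code (A : set (R * R)) :
    option ('I_(4 * (n * N)).+1 * 'I_(4 * (n * N)).+1) :=
  if pselect (exists st, arc_params A st) then
    let st := xget (0, 0) (arc_params A) in Some (inord (cell st.1), inord (cell st.2))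
  else None.

Lemma arc_code_eq_dH_lt (eps : R) (A B : set (R * R)) k : 4 * pi / N%:R < eps ->
  CS1 A -> CS1 B -> arc_code A = arc_code B -> (k < n)%N ->
  dH (iter k f @` A) (iter k f @` B) < eps.
Proof.
move=> eps_gt A_CS1 B_CS1; rewrite /arc_code.
case: pselect => [A_arc|A_arc]; case: pselect => [B_arc|B_arc] //.
  move=> [cs ct] k_lt.
  have [/andP[s0 s1] /andP[st ts] ->] := xgetPex (0, 0) A_arc.
  have [/andP[s0' s1'] /andP[st' ts'] ->] := xgetPex (0, 0) B_arc.
  have cell_ord u : (cell u < (4 * (n * N)).+1)%N by rewrite ltnS cell_le.
  move/(congr1 val): cs; move/(congr1 val): ct; rewrite /= !inordK ?cell_ord // => ct cs.
  by apply: dH_iter_arcs; rewrite ?s0 ?s0' //; lra.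
have whole X : CS1 X -> ~ (exists st, arc_params X st) -> X = @S1 R.
  move=> X_CS1 X_arc; apply/seteqP; split; first by case: X_CS1.
  by apply: contrapT => /(CS1_arc X_CS1) [s [t arc]]; apply: X_arc; exists (s, t).
move=> _ k_lt; rewrite (whole A) // (whole B) //.
have S1_self y : (iter k f @` @S1 R) y ->
    exists2 y', (iter k f @` @S1 R) y' & dS1 y y' <= 0.
  by move=> Sy; exists y; rewrite ?dS1xx.
apply: (dH_lt (d := 0) _ _ _ S1_self S1_self).
- exact: iter_image_S1.
- exact: iter_image_S1.
by rewrite lexx (le_lt_trans mesh_ge0).
Qed.

Lemma sep_CS1_le (eps : R) : 4 * pi / N%:R < eps ->
  sep (@CS1 R) (@dH R) (Cmap f) n eps <= (((4 * (n * N)).+1 ^ 2).+1)%:R.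
Proof.
move=> eps_gt; apply: ge_sup; first by exists 0, 0%N, (fun=> set0); split => //; split; case.
move=> _ [m [E [-> [E_CS1 E_sep]]]]; rewrite ler_nat.
suff /leq_card : injective (arc_code \o E).
  by rewrite card_ord card_option card_prod !card_ord.
move=> i j /= code_ij; apply/eqP/negbNE/negP => /E_sep; apply/negP; rewrite -ltNge.
apply: rho_n_lt => [|k k_lt]; first exact: le_lt_trans mesh_ge0 eps_gt.
by rewrite !iter_Cmap; exact: arc_code_eq_dH_lt.
Qed.

End Cells.

Section Asymptotics.
Variable R : realType.
Local Open Scope ereal_scope.

Lemma limn_esup_ln_ratio_le (s : nat -> R) (C : R) (p : nat) : (1 <= C)%R ->
  (forall k, (1 <= k)%N -> (s k <= C * k%:R ^+ p)%R) ->
  limn_esup (fun k => (ln (s k) / ln k%:R)%:E) <= p%:R%:E.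
Proof.
move=> C_ge1 s_le; apply/lee_addgt0Pr => d d_gt0.
rewrite limn_esup_lim; apply: lime_le; first exact: is_cvg_esups.
pose k0 := maxn 2 (Num.truncn (expR (ln C / d))).+1.
exists k0 => // m /= k0m; apply: ge_ereal_sup => _ [k /= mk <-].
have k0k : (k0 <= k)%N := leq_trans k0m mk.
have k_gt1 : (1 < k%:R :> R)%R by rewrite ltr1n; apply: leq_trans k0k; exact: leq_maxl.
have k_gt0 : (0 < k%:R :> R)%R := lt_trans ltr01 k_gt1.
have lnk_gt0 : (0 < ln (k%:R : R))%R by exact: ln_gt0.
have lnC : (ln C <= d * ln k%:R)%R.
  rewrite mulrC -ler_pdivrMr // -ler_expR lnK ?posrE //.
  have /andP[_ /ltW truncn_gt] := truncn_itv (expR_ge0 (ln C / d)).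
  apply: le_trans truncn_gt _; rewrite ler_nat; apply: leq_trans k0k; exact: leq_maxr.
(* [ln] vanishes on nonpositive arguments, so only [0 < s k] needs the bound on [s] *)
have ln_sk : (ln (s k) <= ln C + p%:R * ln k%:R)%R.
  have [sk_gt0|sk_le0] := ltP 0%R (s k); last first.
    by rewrite ln0 // addr_ge0 ?ln_ge0 // mulr_ge0 // ltW.
  have C_gt0 : (0 < C)%R by apply: lt_le_trans C_ge1.
  apply: le_trans (_ : ln (C * k%:R ^+ p) <= _)%R.
    by rewrite ler_ln ?posrE ?mulr_gt0 ?exprn_gt0 //; apply: s_le; lia.
  by rewrite lnM ?posrE ?exprn_gt0 // lnXn // mulr_natl.
by rewrite -EFinD lee_fin ler_pdivrMr // mulrDl; lra.
Qed.

(* A divergent limit in [\bar R] is the junk value [0], hence [0 <= b]. *)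
Lemma lim_right0_le (F : R -> \bar R) (b : \bar R) : 0 <= b ->
  (forall eps : R, (0 < eps)%R -> F eps <= b) -> lim (F @ 0^'+) <= b.
Proof.
move=> b_ge0 Fb; have [F_cvg|F_dvg] := pselect (cvg (F @ 0^'+)); last by rewrite dvgP.
apply: lime_le => //; near=> eps; apply: Fb.
by near: eps; exact: nbhs_right_gt.
Unshelve. all: by end_near.
Qed.

End Asymptotics.

Lemma exists_nat_div_lt (R : realType) (c eps : R) : 0 <= c -> 0 < eps ->
  exists N : nat, (2 <= N)%N /\ c / N%:R < eps.
Proof.
move=> c_ge0 eps_gt0; exists (Num.truncn (c / eps)).+2; split => //.
rewrite ltr_pdivrMr ?ltr0n // mulrC -ltr_pdivrMr //.
have /andP[_ truncn_gt] := truncn_itv (divr_ge0 c_ge0 (ltW eps_gt0)).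
by apply: lt_le_trans truncn_gt _; rewrite ler_nat.
Qed.

Local Open Scope ereal_scope.

Theorem proposition1 (R : realType) (f : R * R -> R * R) :
  orient_pres_homeo_S1 f ->
  hpol (@CS1 R) (@dH R) (Cmap f) <= 2%:E.
Proof.
case=> [[g [fS1 [_ [gf [_ [fC _]]]]]] _].
have finj p q : S1 p -> S1 q -> f p = f q -> p = q.
  by move=> S1p S1q fpq; rewrite -(gf p S1p) -(gf q S1q) fpq.
apply: lim_right0_le => // eps eps_gt0.
have [N [N_ge2 N_eps]] := exists_nat_div_lt (mulr_ge0 (ler0n _ 4) (@pi_ge0 R)) eps_gt0.
apply: (limn_esup_ln_ratio_le (C := (((4 * N).+1 ^ 2).+1)%:R)) => [|k k_ge1].
  by rewrite ler1n.
apply: le_trans (sep_CS1_le fS1 finj fC k N_ge2 N_eps) _.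
by rewrite -natrX -natrM ler_nat; nia.
Qed.
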